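(* There exist a precompact TAP group $G$ and a countably compact $G^\star$-regular space $X$ such that $C_p(X,G)$ is not TAP.
   Context: All spaces are Tychonoff and non-empty; topological groups are Hausdorff; $e$ denotes the identity. A topological group is precompact if it is a subgroup of some compact group. $C_p(X,G)$ is the group of all continuous maps $X\to G$ with pointwise operations and the topology of pointwise convergence. $X$ is $G^\star$-regular if there exists $g\in G\setminus\{e\}$ such that for every closed $F\subseteq X$ and every $x\in X\setminus F$ there is $f\in C_p(X,G)$ with $f(x)=g$ and $f(F)\subseteq\{e\}$. A subset $A$ of a topological group $H$ is absolutely productive in $H$ if for every injection $a:\mathbb{N}\to A$ and every map $z:\mathbb{N}\to\mathbb{Z}$ the sequence $\left(\prod_{n=0}^{k}a(n)^{z(n)}\right)_{k\in\mathbb{N}}$ converges in $H$; $H$ is TAP if every absolutely productive subset of $H$ is finite. *)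

From HB Require Import structures.
From mathcomp Require Import all_boot all_order all_algebra.
From mathcomp Require Import all_classical all_reals all_analysis.
From mathcomp Require Import Rstruct Rstruct_topology.
Set Implicit Arguments. Unset Strict Implicit. Unset Printing Implicit Defensive.
Import Order.TTheory GRing.Theory Num.Theory.
Local Open Scope classical_set_scope.

Record TopGroup := {
  tg_T :> topologicalType;
  tg_mul : tg_T -> tg_T -> tg_T;
  tg_inv : tg_T -> tg_T;
  tg_one : tg_T;
  tg_mulA : forall x y z, tg_mul x (tg_mul y z) = tg_mul (tg_mul x y) z;
  tg_mul1g : forall x, tg_mul tg_one x = x;
  tg_mulVg : forall x, tg_mul (tg_inv x) x = tg_one;
  tg_cont : continuous (fun p : tg_T * tg_T => tg_mul p.1 (tg_inv p.2));
  tg_hausdorff : hausdorff_space tg_T }.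

Definition zpow {H : Type} (mul : H -> H -> H) (inv : H -> H) (one : H)
  (x : H) (z : int) : H :=
  match z with
  | Posz n => iter n (mul x) one
  | Negz n => iter n.+1 (mul (inv x)) one
  end.

Definition partial_prod {H : Type} (mul : H -> H -> H) (inv : H -> H) (one : H)
  (a : nat -> H) (z : nat -> int) (k : nat) : H :=
  foldl (fun acc n => mul acc (zpow mul inv one (a n) (z n))) one (iota 0 k.+1).

(* A is absolutely productive in the subgroup S of the topological group
   (H, mul, inv, one), S carrying the subspace topology: convergence in S
   means convergence in H to a limit lying in S. *)
Definition abs_productive_in {H : topologicalType} (mul : H -> H -> H)
  (inv : H -> H) (one : H) (S : set H) (A : set H) : Prop :=
  forall (a : nat -> H) (z : nat -> int),
    injective a -> (forall n, A (a n)) ->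
    exists2 l : H, S l & partial_prod mul inv one a z @ \oo --> l.

Definition TAP_in {H : topologicalType} (mul : H -> H -> H)
  (inv : H -> H) (one : H) (S : set H) : Prop :=
  forall A : set H, A `<=` S -> abs_productive_in mul inv one S A -> finite_set A.

Definition TAP (G : TopGroup) : Prop :=
  TAP_in (@tg_mul G) (@tg_inv G) (@tg_one G) setT.

(* Precompact: topologically isomorphic to a subgroup of a compact group. *)
Definition precompact_group (G : TopGroup) : Prop :=
  exists (K : TopGroup) (j : G -> K),
    compact [set: K] /\
    injective j /\
    (forall x y, j (tg_mul x y) = tg_mul (j x) (j y)) /\
    continuous j /\
    (forall U : set G, open U -> exists2 V : set K, open V & j @^-1` V = U).

Definition tychonoff_space (X : topologicalType) : Prop :=
  accessible_space X /\
  forall (B : set X) (x : X), closed B -> ~ B x ->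
    exists f : X -> Rdefinitions.R, continuous f /\ f x = 0%R /\ f @` B `<=` [set 1%R].

Definition countably_compact (X : topologicalType) : Prop :=
  forall U : nat -> set X, (forall n, open (U n)) ->
    [set: X] `<=` \bigcup_n U n ->
    exists N : nat, [set: X] `<=` \bigcup_(n in `I_N) U n.

Definition Gstar_regular (G : TopGroup) (X : topologicalType) : Prop :=
  exists2 g : G, g <> tg_one G &
    forall (F : set X) (x : X), closed F -> ~ F x ->
      exists f : X -> G, continuous f /\ f x = g /\ f @` F `<=` [set tg_one G].

(* C_p(X,G): the subgroup of continuous maps inside G^X with the pointwise
   (product) topology and pointwise operations. *)
Definition Cp_TAP (X : topologicalType) (G : TopGroup) : Prop :=
  @TAP_in {ptws X -> G}
    (fun f g x => tg_mul (f x) (g x))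
    (fun f x => tg_inv (f x))
    (fun _ => tg_one G)
    [set f | continuous (f : X -> G)].

From HB Require Import structures.
From mathcomp Require Import all_boot all_order all_algebra.
From mathcomp Require Import all_classical all_reals all_analysis.
From mathcomp Require Import Rstruct Rstruct_topology.
Set Implicit Arguments. Unset Strict Implicit. Unset Printing Implicit Defensive.
Local Open Scope classical_set_scope.

(* G is the countable Boolean group of finitely supported 0/1-sequences with the
   topology of the Cantor group (Z/2)^N, hence precompact.  An infinite
   absolutely productive set would contain an injective sequence a whose terms
   tend to 0 coordinatewise (take all exponents 1), while by pigeonhole the
   supports of the a n reach arbitrarily far; a diagonal subsequence with
   a (n_j) (i_k) = [j == k] then has a product whose limit is 1 at every i_k,
   so it is not finitely supported.
   X is the convergent sequence N + {oo}.  The maps delta n, equal to the unit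
   vector e_n at n and to 0 elsewhere, are continuous; every signed product of
   distinct ones converges pointwise to a map sending n to e_n or 0 and oo to 0,
   which is continuous because e_n -> 0 in G. *)

Section PartialProdMorph.
Variables (H H' : Type).
Variables (mul : H -> H -> H) (inv : H -> H) (one : H).
Variables (mul' : H' -> H' -> H') (inv' : H' -> H') (one' : H').
Variable phi : H -> H'.
Hypothesis phiM : forall x y, phi (mul x y) = mul' (phi x) (phi y).
Hypothesis phiV : forall x, phi (inv x) = inv' (phi x).
Hypothesis phi1 : phi one = one'.

Lemma zpow_morph x z : phi (zpow mul inv one x z) = zpow mul' inv' one' (phi x) z.
Proof.
have phiX y n : phi (iter n (mul y) one) = iter n (mul' (phi y)) one'.
  by elim: n => //= n IH; rewrite phiM IH.
by case: z => n; rewrite /zpow phiX ?phiV.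
Qed.

Lemma partial_prod_morph a z k :
  phi (partial_prod mul inv one a z k) = partial_prod mul' inv' one' (phi \o a) z k.
Proof.
have foldl_morph acc s :
    phi (foldl (fun acc n => mul acc (zpow mul inv one (a n) (z n))) acc s) =
    foldl (fun acc n => mul' acc (zpow mul' inv' one' (phi (a n)) (z n))) (phi acc) s.
  by elim: s acc => //= n s IH acc; rewrite IH phiM zpow_morph.
by rewrite /partial_prod foldl_morph phi1.
Qed.

End PartialProdMorph.

Lemma partial_prodS {H : Type} (mul : H -> H -> H) inv one a z k :
  partial_prod mul inv one a z k.+1 =
  mul (partial_prod mul inv one a z k) (zpow mul inv one (a k.+1) (z k.+1)).
Proof. by rewrite /partial_prod -addn1 iotaD foldl_cat /= add0n. Qed.

Lemma zpow_addb b z : zpow addb id false b z = b && odd `|z|%N.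
Proof.
have iter_addb n : iter n (addb b) false = b && odd n.
  by elim: n => [|n /= ->]; [rewrite andbF | case: b; case: (odd n)].
by case: z => n; rewrite /zpow iter_addb.
Qed.

Lemma partial_prod_addb t z k :
  partial_prod addb id false t z k = \big[addb/false]_(n < k.+1) (t n && odd `|z n|%N).
Proof.
elim: k => [|k IH]; first by rewrite big_ord_recr big_ord0 /partial_prod /= zpow_addb.
by rewrite partial_prodS big_ord_recr IH zpow_addb.
Qed.

Lemma big_addb_supp1 (t : nat -> bool) n0 k :
  (forall n, n != n0 -> t n = false) ->
  \big[addb/false]_(n < k.+1) t n = (n0 <= k)%N && t n0.
Proof.
move=> t0; have [n0k|kn0] := leqP n0 k.
  rewrite (bigD1 (Ordinal (n0k : (n0 < k.+1)%N))) //= big1 ?addbF // => n.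
  by move=> nn0; apply: t0; apply: contra nn0 => /eqP e; apply/eqP/val_inj.
by rewrite big1 // => n _; apply: t0; rewrite neq_ltn (leq_trans (ltn_ord n)).
Qed.

Lemma ptws_cvgP (I : eqType) (T : topologicalType) (F : set_system {ptws I -> T})
    (FF : Filter F) (f : {ptws I -> T}) :
  F --> f <-> forall i, (fun g : {ptws I -> T} => g i) @ F --> f i.
Proof.
have proj_surj i : (fun g : {ptws I -> T} => g i) @` setT = setT.
  by rewrite eqEsubset; split => // y _; exists (dfwith f i y); rewrite ?dfwithin.
split=> [Ff i|Fi]; first exact: cvg_trans (cvg_app _ Ff) (@proj_continuous I _ i f).
apply/cvg_sup => i; apply/cvg_image; first exact: proj_surj.
apply: cvg_trans (Fi i) => Q /= FQ; exists ((fun g : {ptws I -> T} => g i) @^-1` Q) => //.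
by rewrite image_preimage ?proj_surj.
Qed.

Local Notation C := cantor_space.

Lemma cantor_cvgP (T : Type) (F : set_system T) (FF : Filter F) (u : T -> C) (f : C) :
  u @ F --> f <-> forall i, \forall x \near F, u x i = f i.
Proof.
rewrite (@ptws_cvgP nat bool (u @ F) _ f).
by split=> h i; apply/(@discrete_cvg bool _ _ (fmap_filter _ _)); exact: h.
Qed.

Definition cantor_mul (f g : C) : C := fun i => f i (+) g i.
Definition cantor_one : C := fun=> false.

Lemma cantor_mul_continuous (Y : topologicalType) (u v : Y -> C) :
  continuous u -> continuous v -> continuous (fun y => cantor_mul (u y) (v y)).
Proof.
move=> cu cv y; apply/cantor_cvgP => i.
have /cantor_cvgP/(_ i) uy := cu y; have /cantor_cvgP/(_ i) vy := cv y.
by near=> x; rewrite /cantor_mul (near uy x) ?(near vy x).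
Unshelve. all: by end_near.
Qed.

Lemma cantor_mulA (f g h : C) : cantor_mul f (cantor_mul g h) = cantor_mul (cantor_mul f g) h.
Proof. by apply/funext => i; rewrite /cantor_mul addbA. Qed.

Lemma cantor_mul1 (f : C) : cantor_mul cantor_one f = f.
Proof. by []. Qed.

Lemma cantor_mulVf (f : C) : cantor_mul (id f) f = cantor_one.
Proof. by apply/funext => i; rewrite /cantor_mul addbb. Qed.

Lemma cantor_mulV_continuous : continuous (fun p : C * C => cantor_mul p.1 (id p.2)).
Proof. by apply: cantor_mul_continuous => p; [exact: cvg_fst | exact: cvg_snd]. Qed.

Definition cantor_group : TopGroup :=
  Build_TopGroup cantor_mulA cantor_mul1 cantor_mulVf cantor_mulV_continuous
    cantor_space_hausdorff.

Lemma continuous_inj_hausdorff (A B : topologicalType) (j : A -> B) :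
  injective j -> continuous j -> hausdorff_space B -> hausdorff_space A.
Proof.
move=> ij cj hB p q pq; apply: ij; apply: hB => U V /= pU qV.
have [x [Ux Vx]] := pq _ _ (cj _ _ pU) (cj _ _ qV).
by exists (j x).
Qed.

Definition finsupp (f : C) : Prop := exists M, forall i, (M <= i)%N -> f i = false.

Lemma finsupp_mul (f g : C) : finsupp f -> finsupp g -> finsupp (cantor_mul f g).
Proof.
move=> [M fM] [N gN]; exists (maxn M N) => i; rewrite geq_max => /andP[Mi Ni].
by rewrite /cantor_mul fM ?gN.
Qed.

Lemma finsupp1 : finsupp cantor_one.
Proof. by exists 0%N. Qed.

Definition G := set_type finsupp.
HB.instance Definition _ := Topological.on G.

Definition gval : G -> C := @set_val C finsupp.
Definition gmul (x y : G) : G :=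
  SigSub (mem_set (finsupp_mul (set_valP x) (set_valP y))).
Definition gone : G := SigSub (mem_set finsupp1).

Lemma gval_inj : injective gval.
Proof. by move=> x y; rewrite /gval set_valE; exact: val_inj. Qed.

Lemma gval_continuous : continuous gval.
Proof. exact: initial_continuous. Qed.

Lemma gval_finsupp (x : G) : finsupp (gval x).
Proof. by rewrite /gval set_valE; exact: set_valP. Qed.

Lemma gvalM (x y : G) : gval (gmul x y) = cantor_mul (gval x) (gval y).
Proof. by []. Qed.

Lemma gmulA (x y z : G) : gmul x (gmul y z) = gmul (gmul x y) z.
Proof. by apply: gval_inj; rewrite !gvalM cantor_mulA. Qed.

Lemma gmul1 (x : G) : gmul gone x = x.
Proof. exact: gval_inj. Qed.

Lemma gmulVg (x : G) : gmul (id x) x = gone.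
Proof. by apply: gval_inj; rewrite gvalM cantor_mulVf. Qed.

Lemma gmulV_continuous : continuous (fun p : G * G => gmul p.1 (id p.2)).
Proof.
apply: (@continuous_comp_initial _ _ _ gval).
apply: cantor_mul_continuous => p; apply: continuous_comp; try exact: gval_continuous.
  exact: cvg_fst.
exact: cvg_snd.
Qed.

Definition G_group : TopGroup :=
  Build_TopGroup gmulA gmul1 gmulVg gmulV_continuous
    (continuous_inj_hausdorff gval_inj gval_continuous cantor_space_hausdorff).

Lemma G_precompact : precompact_group G_group.
Proof.
exists cantor_group, gval; split; first exact: cantor_space_compact.
split; first exact: gval_inj.
split; first by [].
split; first exact: gval_continuous.
by move=> U [V oV <-]; exists V.
Qed.

Lemma G_cvg (T : Type) (F : set_system T) (FF : Filter F) (u : T -> G) (g : G) :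
  (forall i, \forall x \near F, gval (u x) i = gval g i) -> u @ F --> g.
Proof.
move=> /(cantor_cvgP _ (fun x => gval (u x))) ug U /=.
rewrite nbhsE => -[_ [[V oV <-] Vg] VU].
have /ug : nbhs (gval g) V by apply: open_nbhs_nbhs; split.
by rewrite nbhs_simpl /= => FV; apply: filterS FV => x; exact: VU.
Qed.

Lemma gval_partial_prod (a : nat -> G) z k i :
  gval (partial_prod gmul id gone a z k) i =
  \big[addb/false]_(n < k.+1) (gval (a n) i && odd `|z n|%N).
Proof.
by rewrite (@partial_prod_morph _ _ _ _ _ addb id false (fun x => gval x i))
  // partial_prod_addb.
Qed.

Lemma infinite_set_seq (T : Type) (A : set T) : infinite_set A ->
  exists a : nat -> T, injective a /\ forall n, A (a n).
Proof.
move=> /infiniteP/card_leP[f].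
exists (fun n => set_val (f (SigSub (mem_set (I : [set: nat] n))))); split.
  move=> m n /val_inj/(@inj _ _ _ f) fmn.
  by have /(congr1 val) := fmn (mem_set I) (mem_set I).
by move=> n; exact: set_valP.
Qed.

(* Pigeonhole: on [N, N + 2^M] an injective sequence cannot vanish beyond M. *)
Lemma injective_cantor_seq_unbounded (a : nat -> C) : injective a ->
  forall M N, exists n i, [/\ (N <= n)%N, (M <= i)%N & a n i].
Proof.
move=> ainj M N; apply: contrapT => noMN.
have a0 n i : (N <= n)%N -> (M <= i)%N -> a n i = false.
  by move=> Nn Mi; apply/negP => ani; apply: noMN; exists n, i.
pose h (j : 'I_(2 ^ M).+1) : {ffun 'I_M -> bool} := [ffun i : 'I_M => a (N + j)%N i].
have /leq_card : injective h.
  move=> j1 j2 /ffunP h12; apply/val_inj/(@addnI N)/ainj/funext => i.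
  have [Mi|iM] := leqP M i; first by rewrite !a0 ?leq_addr.
  by have := h12 (Ordinal iM); rewrite !ffunE.
by rewrite card_ffun card_bool !card_ord ltnn.
Qed.

Section DiagonalSubsequence.
Variable a : nat -> C.
Hypothesis a_finsupp : forall n, finsupp (a n).
Hypothesis a_eventually_false : forall i, exists N, forall n, (N <= n)%N -> a n i = false.
Hypothesis a_unbounded : forall M N, exists n i, [/\ (N <= n)%N, (M <= i)%N & a n i].

Lemma diagonal_subsequence : exists nk ik : nat -> nat,
  (forall k, k <= ik k)%N /\ forall j k, a (nk j) (ik k) = (j == k).
Proof.
have /choice[p pP] : forall b, exists ni : nat * nat,
    [/\ (b <= ni.1)%N, (b <= ni.2)%N & a ni.1 ni.2].
  by move=> b; have [n [i [*]]] := a_unbounded b b; exists (n, i).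
have [sup supP] := choice a_finsupp.
have [ev evP] := choice a_eventually_false.
pose step b := maxn (p b).1.+1 (maxn (sup (p b).1) (ev (p b).2)).
pose B k := iter k step 0%N.
exists (fun k => (p (B k)).1), (fun k => (p (B k)).2).
have Bn k : (B k <= (p (B k)).1)%N by case: (pP (B k)).
have Bi k : (B k <= (p (B k)).2)%N by case: (pP (B k)).
have ani k : a (p (B k)).1 (p (B k)).2 by case: (pP (B k)).
have nB k : ((p (B k)).1 < B k.+1)%N by rewrite /= /step leq_max leqnn.
have supB k : (sup (p (B k)).1 <= B k.+1)%N by rewrite /= /step !leq_max leqnn orbT.
have evB k : (ev (p (B k)).2 <= B k.+1)%N by rewrite /= /step !leq_max leqnn !orbT.
have B_lt : {homo B : j k / (j < k)%N} := homo_ltn ltn_trans (fun k => leq_ltn_trans (Bn k) (nB k)).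
have B_le : {homo B : j k / (j <= k)%N} := homo_leq leqnn leq_trans (fun k => ltnW (B_lt _ _ (ltnSn k))).
split=> [k|j k].
  apply: leq_trans (Bi k); elim: k => // k IH.
  exact: leq_ltn_trans IH (B_lt _ _ (ltnSn k)).
case: (ltngtP j k) => [jk|kj|->]; last exact: ani.
  by apply: supP; apply: leq_trans (supB j) (leq_trans (B_le _ _ jk) (Bi k)).
by apply: evP; apply: leq_trans (evB k) (leq_trans (B_le _ _ kj) (Bn j)).
Qed.

End DiagonalSubsequence.

Lemma partial_prod_cvg_coord (a : nat -> G) z (l : G) :
  partial_prod gmul id gone a z @ \oo --> l -> forall i, exists N, forall k, (N <= k)%N ->
    \big[addb/false]_(n < k.+1) (gval (a n) i && odd `|z n|%N) = gval l i.
Proof.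
move=> ppl i; have /cantor_cvgP ppli := cvg_comp _ _ ppl (@gval_continuous l).
by have [N _ ppNl] := ppli i; exists N => k Nk; rewrite -gval_partial_prod; exact: ppNl.
Qed.

(* Taking all exponents 1, consecutive partial products differ by the next term. *)
Lemma partial_prod1_cvg_eventually_false (a : nat -> G) (l : G) :
  partial_prod gmul id gone a (fun=> 1%Z) @ \oo --> l ->
  forall i, exists N, forall n, (N <= n)%N -> gval (a n) i = false.
Proof.
move=> /partial_prod_cvg_coord ppl i; have [N ppNl] := ppl i.
exists N.+1 => -[//|n] Nn; have := ppNl n.+1 (ltnW Nn).
by rewrite big_ord_recr /= ppNl // andbT; case: (gval l i); case: (gval (a n.+1) i).
Qed.

Lemma G_TAP : TAP G_group.
Proof.
move=> A _ Aprod; apply: contrapT => /infinite_set_seq[a [ainj aA]].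
have [_ _ /partial_prod1_cvg_eventually_false a_ev] := Aprod a (fun=> 1%Z) ainj aA.
have a_unbounded := injective_cantor_seq_unbounded (inj_comp gval_inj ainj).
have [nk [ik [ik_ge aE]]] := diagonal_subsequence (fun n => gval_finsupp (a n)) a_ev a_unbounded.
pose z n : int := `[< exists k, nk k = n >].
have [l _ /partial_prod_cvg_coord ppl] := Aprod a z ainj aA.
have l_ik k : gval l (ik k).
  have [N ppNl] := ppl (ik k); rewrite -(ppNl (maxn N (nk k))) ?leq_maxl //.
  rewrite (@big_addb_supp1 (fun n => gval (a n) (ik k) && odd `|z n|%N) (nk k)).
    by rewrite leq_maxr aE eqxx /=; case: asboolP => // nk_notin; case: nk_notin; exists k.
  move=> n; rewrite /z; case: asboolP => [[j <-] jk|_]; last by rewrite andbF.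
  by rewrite aE; case: (eqVneq j k) jk => [->|]; rewrite ?eqxx.
have [M lM] := gval_finsupp l.
by have := l_ik M; rewrite lM // (leq_trans (ik_ge M)).
Qed.

(* The convergent sequence: [Some n] is the point n and [None] its limit. *)
Definition omega1 := option nat.
HB.instance Definition _ := Choice.on omega1.

Definition omega1_open (U : set omega1) : Prop :=
  U None -> exists N, forall n, (N <= n)%N -> U (Some n).

Lemma omega1_openT : omega1_open setT.
Proof. by move=> _; exists 0%N. Qed.

Lemma omega1_openI : setI_closed omega1_open.
Proof.
move=> A B oA oB [/oA[N AN] /oB[M BM]]; exists (maxn N M) => n.
by rewrite geq_max => /andP[/AN ? /BM ?].
Qed.

Lemma omega1_openU (I : Type) (f : I -> set omega1) :
  (forall i, omega1_open (f i)) -> omega1_open (\bigcup_i f i).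
Proof. by move=> fo [i _ /fo[N fN]]; exists N => n /fN; exists i. Qed.

HB.instance Definition _ :=
  isOpenTopological.Build omega1 omega1_openT omega1_openI omega1_openU.

Lemma omega1_openE : @open omega1 = omega1_open.
Proof. by []. Qed.

Lemma omega1_continuous (T : topologicalType) (h : omega1 -> T) :
  (fun n => h (Some n)) @ \oo --> h None -> continuous h.
Proof.
move=> hcvg; apply/continuousP => A oA; rewrite omega1_openE => hA.
have [N _ AN] := hcvg _ (open_nbhs_nbhs (conj oA hA)).
by exists N => n /AN.
Qed.

(* Inside an open set, every point has a clopen neighbourhood whose indicator is
   eventually constant. *)
Lemma omega1_separating_map (T : topologicalType) (t1 t0 : T) (F : set omega1) x :
  closed F -> ~ F x ->
  exists f : omega1 -> T, [/\ continuous f, f x = t1 & f @` F `<=` [set t0]].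
Proof.
move=> /closed_openC oFC Fx.
have [D [Dx DF [N DN]]] : exists D : omega1 -> bool, [/\ D x, forall y, D y -> ~ F y &
    exists N, forall n, (N <= n)%N -> D (Some n) = D None].
  case: x Fx => [m|] Fx.
    exists (pred1 (Some m)); split=> [||]; first exact: eqxx.
      by move=> y /eqP ->.
    by exists m.+1 => n mn; apply/eqP => -[nm]; rewrite nm ltnn in mn.
  have [N FN] := oFC Fx.
  exists (fun y => if y is Some n then (N <= n)%N else true); split=> //.
    by case=> [n /FN|].
  by exists N => n ->.
exists (fun y => if D y then t1 else t0); split.
- by apply: omega1_continuous; apply: cvg_near_cst; exists N => // n /DN ->.
- by rewrite Dx.
- by move=> _ [y Fy <-]; case: ifP => // /DF.
Qed.

Lemma omega1_tychonoff : tychonoff_space omega1.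
Proof.
split=> [x y xy|B x cB Bx]; last first.
  by have [f [*]] := omega1_separating_map (0%R : Rdefinitions.R) 1%R cB Bx; exists f.
exists [set t | t != y]; split; [|exact/mem_set|by apply/mem_set; rewrite /= eqxx].
rewrite omega1_openE; case: y xy => [m|] _ /= _ //.
by exists m.+1 => n mn /=; apply/eqP => -[nm]; rewrite nm ltnn in mn.
Qed.

Lemma omega1_countably_compact : countably_compact omega1.
Proof.
move=> U oU cov; have /choice[idx Uidx] : forall x, exists j, U j x.
  by move=> x; have [j _ Ujx] := cov x I; exists j.
have [N UN] := oU _ (Uidx None).
exists (maxn (idx None).+1 (\max_(m < N) (idx (Some (m : nat))).+1)) => x _.
case: x => [m|]; last by exists (idx None) => //=; rewrite leq_max ltnSn.
have [Nm|mN] := leqP N m.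
  by exists (idx None); rewrite /= ?leq_max ?ltnSn //; exact: UN.
exists (idx (Some m)) => //=; rewrite leq_max; apply/orP; right.
exact: (leq_bigmax_cond (Ordinal mN)).
Qed.

Definition unit_vec (m : nat) : C := fun i => i == m.

Lemma finsupp_unit_vec m : finsupp (unit_vec m).
Proof. by exists m.+1 => i mi; apply/eqP => im; rewrite im ltnn in mi. Qed.

Definition gunit (m : nat) : G := SigSub (mem_set (finsupp_unit_vec m)).

Lemma gval_gunit m : gval (gunit m) = unit_vec m.
Proof. by []. Qed.

Lemma gunit_neq1 m : gunit m <> gone.
Proof. by move=> /(congr1 (fun g => gval g m)); rewrite gval_gunit /unit_vec eqxx. Qed.

Lemma omega1_Gstar_regular : Gstar_regular G_group omega1.
Proof.
exists (gunit 0); first exact: gunit_neq1.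
move=> F x cF Fx; have [f [*]] := omega1_separating_map (gunit 0 : G_group) gone cF Fx.
by exists f.
Qed.

Definition delta (n : nat) : {ptws omega1 -> G_group} :=
  fun x => if x == Some n then gunit n else gone.

Lemma gval_delta n x i : gval (delta n x) i = (x == Some n) && (i == n).
Proof. by rewrite /delta; case: eqP. Qed.

Lemma delta_inj : injective delta.
Proof.
move=> m n /(congr1 (fun f : {ptws omega1 -> G_group} => gval (f (Some n)) n)).
by rewrite !gval_delta !eqxx => /andP[_ /eqP].
Qed.

Lemma delta_continuous n : continuous (delta n : omega1 -> G_group).
Proof.
apply: omega1_continuous; apply: cvg_near_cst; exists n.+1 => // m nm.
by rewrite /delta; case: eqP => // -[mn]; move: nm; rewrite /= mn ltnn.
Qed.

Section DeltaProducts.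
Variables (s : nat -> nat) (z : nat -> int).
Hypothesis s_inj : injective s.

Definition delta_prod_limit : {ptws omega1 -> G_group} := fun x =>
  if x is Some m then
    if `[< exists2 n, s n = m & odd `|z n|%N >] then gunit m else gone
  else gone.

Lemma delta_prod_limit_continuous : continuous (delta_prod_limit : omega1 -> G_group).
Proof.
apply: omega1_continuous; apply: G_cvg => i; exists i.+1 => // m im /=.
by case: ifP => // _; rewrite gval_gunit /unit_vec ltn_eqF.
Qed.

Let ptmul (f g : {ptws omega1 -> G_group}) x := tg_mul (f x) (g x).
Let ptinv (f : {ptws omega1 -> G_group}) x := tg_inv (f x).
Let ptone : {ptws omega1 -> G_group} := fun=> tg_one G_group.

Lemma gval_delta_partial_prod k x i :
  gval (partial_prod ptmul ptinv ptone (delta \o s) z k x) i =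
  \big[addb/false]_(n < k.+1) ((x == Some (s n)) && (i == s n) && odd `|z n|%N).
Proof.
rewrite (@partial_prod_morph _ _ _ _ _ addb id false (fun f => gval (f x) i)) //.
by rewrite partial_prod_addb; apply: eq_bigr => n _; rewrite /= gval_delta.
Qed.

Lemma delta_partial_prod_cvg :
  partial_prod ptmul ptinv ptone (delta \o s) z @ \oo --> delta_prod_limit.
Proof.
apply/ptws_cvgP => x; apply: G_cvg => i.
have [[n0 ->]|x_notin] := pselect (exists n0, x = Some (s n0)).
  exists n0 => // k n0k /=; rewrite gval_delta_partial_prod.
  rewrite (@big_addb_supp1
    (fun n => (Some (s n0) == Some (s n)) && (i == s n) && odd `|z n|%N) n0) //=.
    rewrite eqxx n0k /=; case: asboolP => [[n /s_inj -> ->]|no_odd].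
      by rewrite andbT gval_gunit.
    by case: (boolP (odd _)) => [n0_odd|]; [case: no_odd; exists n0 | rewrite andbF].
  by move=> n nn0; case: eqP => // -[/s_inj n0n]; rewrite n0n eqxx in nn0.
exists 0%N => // k _ /=; rewrite gval_delta_partial_prod big1 => [|n _]; last first.
  by case: eqP => // xn; case: x_notin; exists n.
case: x x_notin => // m m_notin /=; case: asboolP => // -[n smn _].
by case: m_notin; exists n; rewrite smn.
Qed.

End DeltaProducts.

Lemma not_Cp_TAP_omega1 : ~ Cp_TAP omega1 G_group.
Proof.
move=> CpTAP; apply: infinite_nat.
suff /(finite_preimage (fun m n _ _ => @delta_inj m n)) : finite_set (range delta).
  by apply: sub_finite_set => n _; exists n.
apply: CpTAP => [_ [n _ <-]|b z b_inj b_delta]; first exact: delta_continuous.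
have /choice[s sb] : forall n, exists m, delta m = b n.
  by move=> n; have [m _ dmb] := b_delta n; exists m.
have -> : b = delta \o s by apply/funext => n; rewrite /= sb.
have s_inj : injective s by move=> m n smn; apply: b_inj; rewrite -!sb smn.
exists (delta_prod_limit s z); first exact: delta_prod_limit_continuous.
exact: delta_partial_prod_cvg.
Qed.

Theorem theorem6p8 :
  exists G : TopGroup, precompact_group G /\ TAP G /\
    exists X : topologicalType,
      tychonoff_space X /\ (exists x : X, True) /\
      countably_compact X /\ Gstar_regular G X /\ ~ Cp_TAP X G.
Proof.
exists G_group; split; first exact: G_precompact.
split; first exact: G_TAP.
exists omega1; split; first exact: omega1_tychonoff.
split; first by exists None.
split; first exact: omega1_countably_compact.
split; first exact: omega1_Gstar_regular.
exact: not_Cp_TAP_omega1.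
Qed.
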